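(* Let $G$ be a grid-labelled graph of type $(3,3)$ with exactly $4$ edges, all diagonal. Then $G$ satisfies the degree criterion if and only if either $G$ is locally isomorphic to the cross-hatch $B_4$, or $E(G)$ is the disjoint union of two criss-crosses, i.e. of two edge sets of the form $\{\{(i,j),(k,l)\},\{(i,l),(k,j)\}\}$ with $i\neq k$, $j\neq l$.
   Context: A grid-labelled graph of type $(a,b)$ is a simple graph whose vertex set is the grid $[a]\times[b]$. An edge $\{(i,j),(k,l)\}$ is diagonal if $i\neq k$ and $j\neq l$. The partial transpose $\Gamma(G)$ is the grid-labelled graph with edge set $\{\{(k,j),(i,l)\}:\{(i,j),(k,l)\}\in E(G)\}$; $G$ satisfies the degree criterion if every vertex has the same degree in $G$ and in $\Gamma(G)$. Two grid-labelled graphs $G,H$ of type $(a,b)$ are locally isomorphic if there are permutations $\pi$ of $[a]$ and $\sigma$ of $[b]$ with $\{(i,j),(k,l)\}\in E(G)\iff\{(\pi(i),\sigma(j)),(\pi(k),\sigma(l))\}\in E(H)$. The cross-hatch $B_4$ is the type $(3,3)$ graph with edges $\{(1,1),(2,3)\},\{(2,1),(3,3)\},\{(1,2),(3,1)\},\{(1,3),(3,2)\}$. *)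

From mathcomp Require Import all_boot all_fingroup.
Set Implicit Arguments. Unset Strict Implicit. Unset Printing Implicit Defensive.

(* Vertices of the (3,3) grid [3]x[3]; index t in [3] is represented by t-1 : 'I_3. *)
Definition V3 : finType := ('I_3 * 'I_3)%type.

Definition grid_graph (E : {set {set V3}}) : Prop :=
  forall e, e \in E -> #|e| = 2.

Definition diagonal (e : {set V3}) : Prop :=
  exists i j k l : 'I_3, [/\ i != k, j != l & e = [set (i, j); (k, l)]].

Definition ptrans (E : {set {set V3}}) : {set {set V3}} :=
  [set [set (x.2.1, x.1.2); (x.1.1, x.2.2)]
     | x in [set x : V3 * V3 | [set x.1; x.2] \in E]].

Definition degree (E : {set {set V3}}) (v : V3) : nat :=
  #|[set e in E | v \in e]|.

Definition degree_criterion (E : {set {set V3}}) : Prop :=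
  forall v : V3, degree E v = degree (ptrans E) v.

Definition locally_isomorphic (E H : {set {set V3}}) : Prop :=
  exists (pi sigma : {perm 'I_3}),
    forall i j k l : 'I_3,
      ([set (i, j); (k, l)] \in E) =
      ([set (pi i, sigma j); (pi k, sigma l)] \in H).

Definition gv (i j : nat) : V3 := (inord i.-1, inord j.-1).

(* The cross-hatch B_4 (1-indexed coordinates as in the paper). *)
Definition B4 : {set {set V3}} :=
  [set [set gv 1 1; gv 2 3]; [set gv 2 1; gv 3 3];
       [set gv 1 2; gv 3 1]; [set gv 1 3; gv 3 2]].

Definition criss_cross (C : {set {set V3}}) : Prop :=
  exists i j k l : 'I_3, [/\ i != k, j != l &
    C = [set [set (i, j); (k, l)]; [set (i, l); (k, j)]]].

From mathcomp Require Import all_boot all_fingroup.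
Set Implicit Arguments. Unset Strict Implicit. Unset Printing Implicit Defensive.

(* A diagonal edge of the 3x3 grid is one of the two diagonals of a 2x2
   subrectangle, and the partial transpose replaces it by the other diagonal,
   its partner.  Permuting rows and columns commutes with the partial
   transpose and preserves degrees, so locally isomorphic graphs satisfy the
   degree criterion together; B4 satisfies it, and a union of criss-crosses is
   fixed by the partial transpose.  Conversely, of the 3060 sets of four of the
   18 diagonal edges only 54 satisfy the criterion, and a finite check shows
   that each of them is mapped into B4 by a row and column permutation or
   splits into two partner pairs. *)

Lemma eq_set2 (T : finType) (a b c d : T) :
  ([set a; b] == [set c; d]) = (a == c) && (b == d) || (a == d) && (b == c).
Proof.
apply/idP/idP => [/eqP e | /orP[] /andP[/eqP-> /eqP->]]; last 2 first.
- exact: eqxx.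
- by rewrite setUC.
have ha : a \in [set c; d] by rewrite -e set21.
have hb : b \in [set c; d] by rewrite -e set22.
have hc : c \in [set a; b] by rewrite e set21.
have hd : d \in [set a; b] by rewrite e set22.
move: ha hb hc hd; rewrite !inE => /orP[]/eqP-> /orP[]/eqP->; rewrite !eqxx ?orbT //=.
- by rewrite andbT !orbb eq_sym => _ ->.
- by rewrite andbT !orbb eq_sym => ->.
Qed.

Lemma imset_set2 (aT rT : finType) (f : aT -> rT) (a b : aT) :
  f @: [set a; b] = [set f a; f b].
Proof. by rewrite imsetU1 imset_set1. Qed.

Section SubseqsOfSize.
Variable T : eqType.

Fixpoint subseqs_of_size (k : nat) (s : seq T) : seq (seq T) :=
  match k, s with
  | 0, _ => [:: [::]]
  | k.+1, [::] => [::]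
  | k.+1, x :: s' => map (cons x) (subseqs_of_size k s') ++ subseqs_of_size k.+1 s'
  end.

Lemma mem_subseqs_of_size (s t : seq T) :
  subseq t s -> t \in subseqs_of_size (size t) s.
Proof.
elim: s t => [|x s IHs] [|y t] //=.
by case: eqP => [-> /IHs tP | _ /IHs tP]; rewrite mem_cat ?map_f ?tP ?orbT.
Qed.

End SubseqsOfSize.

Lemma degree_imset (phi : V3 -> V3) (E : {set {set V3}}) (v : V3) :
  injective phi -> degree ([set phi @: e | e : {set V3} in E]) (phi v) = degree E v.
Proof.
move=> phi_inj; rewrite /degree -[RHS](card_imset _ (imset_inj phi_inj)).
apply: eq_card => f; rewrite inE.
apply/idP/imsetP => [/andP[/imsetP[e Ee ->]]|[e]].
- by rewrite mem_imset // => ve; exists e; rewrite // inE Ee.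
- by rewrite inE => /andP[Ee ve] ->; rewrite mem_imset // ve imset_f.
Qed.

Section TwoSetFamilies.
Variable T : finType.
Implicit Types (phi : T -> T) (E F : {set {set T}}).

Lemma two_sets_imset phi E F :
  bijective phi -> {in E, forall e : {set T}, #|e| = 2} -> {in F, forall f : {set T}, #|f| = 2} ->
  (forall a b, ([set a; b] \in E) = ([set phi a; phi b] \in F)) ->
  F = [set phi @: e | e : {set T} in E].
Proof.
move=> [psi phiK psiK] gE gF EF; apply/setP => f; apply/idP/imsetP => [Ff|[e Ee ->]].
- have /eqP/cards2P[c [d [_ fE]]] := gF f Ff; rewrite fE in Ff *.
  exists [set psi c; psi d]; first by rewrite EF !psiK.
  by rewrite imset_set2 !psiK.
- have /eqP/cards2P[a [b [_ eab]]] := gE e Ee.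
  by rewrite eab imset_set2 -EF -eab.
Qed.

Lemma imset_two_sets phi E F :
  injective phi -> F = [set phi @: e | e : {set T} in E] ->
  forall a b, ([set a; b] \in E) = ([set phi a; phi b] \in F).
Proof. by move=> phi_inj -> a b; rewrite -imset_set2 mem_imset //; apply: imset_inj. Qed.

End TwoSetFamilies.

Definition grid_map (f g : 'I_3 -> 'I_3) (v : V3) : V3 := (f v.1, g v.2).

Lemma grid_map_inj (f g : 'I_3 -> 'I_3) :
  injective f -> injective g -> injective (grid_map f g).
Proof. by move=> f_inj g_inj [a b] [c d] [/f_inj-> /g_inj->]. Qed.

Definition transpose_pair (x : V3 * V3) : {set V3} := [set (x.2.1, x.1.2); (x.1.1, x.2.2)].

Lemma ptrans_imset (f g : 'I_3 -> 'I_3) (E : {set {set V3}}) :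
  bijective (grid_map f g) ->
  ptrans [set grid_map f g @: e | e : {set V3} in E] =
  [set grid_map f g @: e | e : {set V3} in ptrans E].
Proof.
set phi := grid_map f g => phi_bij; have phi_inj := bij_inj phi_bij.
have [psi _ psiK] := phi_bij.
have transpose_map y : transpose_pair (phi y.1, phi y.2) = phi @: transpose_pair y.
  by rewrite imset_set2.
have mem_E y :
    ([set phi y.1; phi y.2] \in [set phi @: e | e : {set V3} in E]) = ([set y.1; y.2] \in E).
  by rewrite (imset_two_sets phi_inj (erefl _)).
apply/setP => e; apply/imsetP/imsetP => [[[x1 x2]]|[_ /imsetP[y + ->] ->]].
- rewrite inE /= -[x1]psiK -[x2]psiK => Ex ->.
  exists (transpose_pair (psi x1, psi x2)); last exact: (transpose_map (psi x1, psi x2)).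
  by apply: imset_f; rewrite inE -(mem_E (psi x1, psi x2)).
- rewrite inE -mem_E => Ey; exists (phi y.1, phi y.2); first by rewrite inE.
  exact: esym (transpose_map y).
Qed.

Lemma degree_criterion_imset (f g : 'I_3 -> 'I_3) (E : {set {set V3}}) :
  bijective (grid_map f g) ->
  degree_criterion [set grid_map f g @: e | e : {set V3} in E] <-> degree_criterion E.
Proof.
move=> phi_bij; have phi_inj := bij_inj phi_bij; have [psi _ psiK] := phi_bij.
rewrite /degree_criterion ptrans_imset //; split=> dcE v.
- rewrite -[degree E v](degree_imset _ _ phi_inj).
  by rewrite -[degree (ptrans E) v](degree_imset _ _ phi_inj).
- by rewrite -[v]psiK !degree_imset.
Qed.

Lemma locally_isomorphic_degree_criterion (E F : {set {set V3}}) :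
  grid_graph E -> grid_graph F -> locally_isomorphic E F ->
  degree_criterion F -> degree_criterion E.
Proof.
move=> gE gF [pi [sigma EF]].
have phi_bij : bijective (grid_map pi sigma).
  by apply/injF_bij/grid_map_inj; apply: perm_inj.
move=> dcF; apply/(degree_criterion_imset _ phi_bij).
by rewrite -(two_sets_imset phi_bij gE gF) // => [[i j] [k l]]; apply: EF.
Qed.

Definition edge (p : V3 * V3) : {set V3} := [set p.1; p.2].

Definition edges (s : seq (V3 * V3)) : {set {set V3}} := [set:: map edge s].

Definition partner (p : V3 * V3) : V3 * V3 := ((p.1.1, p.2.2), (p.2.1, p.1.2)).

Lemma partnerK : involutive partner.
Proof. by case=> [[? ?] [? ?]]. Qed.

Lemma transpose_pair_edge (x p : V3 * V3) :
  [set x.1; x.2] = edge p -> transpose_pair x = edge (partner p).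
Proof.
case: x => a b /eqP; rewrite eq_set2 /= => /orP[] /andP[/eqP-> /eqP->] //.
by rewrite /transpose_pair /edge setUC.
Qed.

Lemma ptrans_edges (s : seq (V3 * V3)) : ptrans (edges s) = edges (map partner s).
Proof.
apply/setP => e; rewrite [RHS]inE -map_comp.
apply/imsetP/mapP => [[x]|[p ps ->]].
- by rewrite !inE => /mapP[p ps /transpose_pair_edge xp ->]; exists p.
- exists (p.1, p.2); first by rewrite !inE /=; apply: (map_f edge ps).
  exact: esym (@transpose_pair_edge (p.1, p.2) p erefl).
Qed.

(* Closed enumerations of ['I_3] and [V3]: [enum] and [inord] do not reduce
   under [vm_compute]. *)
Definition ord3 : seq 'I_3 := [:: @Ordinal 3 0 isT; @Ordinal 3 1 isT; @Ordinal 3 2 isT].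

Definition grid : seq V3 := [seq (i, j) | i <- ord3, j <- ord3].

Lemma mem_ord3 (i : 'I_3) : i \in ord3.
Proof. by case: i => [[|[|[|]]] ?]. Qed.

Lemma mem_grid (v : V3) : v \in grid.
Proof. by case: v => i j; apply: allpairs_f; apply: mem_ord3. Qed.

(* Each diagonal edge is represented exactly once, by its endpoints in
   increasing row order; [partner] maps the representative of an edge to that
   of its partial transpose. *)
Definition diag_reps : seq (V3 * V3) :=
  [seq p : V3 * V3 <- [seq (u, w) | u <- grid, w <- grid] |
     (p.1.1 < p.2.1) && (p.1.2 != p.2.2)].

Lemma mem_diag_reps (p : V3 * V3) :
  (p \in diag_reps) = (p.1.1 < p.2.1) && (p.1.2 != p.2.2).
Proof. by rewrite mem_filter; case: p => u w; rewrite allpairs_f ?mem_grid ?andbT. Qed.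

Lemma uniq_diag_reps : uniq diag_reps.
Proof. by vm_compute. Qed.

Lemma edge_inj : {in diag_reps &, injective edge}.
Proof.
move=> p q; rewrite !mem_diag_reps => /andP[pr _] /andP[qr _] /eqP.
rewrite eq_set2 => /orP[] /andP[/eqP e1 /eqP e2].
- by case: p q e1 e2 {pr qr} => [? ?] [? ?] /= -> ->.
- by rewrite e1 e2 ltnNge (ltnW qr) in pr.
Qed.

Lemma partner_diag (p : V3 * V3) : p \in diag_reps -> partner p \in diag_reps.
Proof. by rewrite !mem_diag_reps /= eq_sym. Qed.

Lemma diagonal_edge (e : {set V3}) : diagonal e -> exists2 p, p \in diag_reps & e = edge p.
Proof.
case=> i [j [k [l [+ jl ->]]]]; rewrite -val_eqE neq_ltn => /orP[ik|ki].
- by exists ((i, j), (k, l)); rewrite // mem_diag_reps ik.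
- by exists ((k, l), (i, j)); rewrite ?mem_diag_reps ?ki 1?eq_sym // /edge setUC.
Qed.

Lemma edges_diagonal (E : {set {set V3}}) :
  (forall e, e \in E -> diagonal e) -> E = edges [seq p <- diag_reps | edge p \in E].
Proof.
move=> diagE; apply/setP => e; rewrite inE; apply/idP/mapP => [Ee | [p]].
- by have [p pD eE] := diagonal_edge (diagE e Ee); exists p; rewrite // mem_filter -eE Ee.
- by rewrite mem_filter => /andP[Ep _] ->.
Qed.

Lemma card_edges (s : seq (V3 * V3)) :
  uniq s -> {subset s <= diag_reps} -> #|edges s| = size s.
Proof.
move=> us sD; rewrite cardsE -(size_map edge); apply/card_uniqP.
by rewrite map_inj_in_uniq //; apply: sub_in2 edge_inj.
Qed.

Lemma grid_graph_edges (s : seq (V3 * V3)) :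
  {subset s <= diag_reps} -> grid_graph (edges s).
Proof.
move=> sD e; rewrite inE => /mapP[p /sD]; rewrite mem_diag_reps => /andP[pr _] ->.
by rewrite cards2; case: eqP pr => // ->; rewrite ltnn.
Qed.

Definition incident (v : V3) (p : V3 * V3) : bool := (v == p.1) || (v == p.2).

Lemma mem_edge (v : V3) (p : V3 * V3) : (v \in edge p) = incident v p.
Proof. exact: in_set2. Qed.

Lemma degree_edges (s : seq (V3 * V3)) (v : V3) :
  uniq s -> {subset s <= diag_reps} -> degree (edges s) v = count (incident v) s.
Proof.
move=> us sD; rewrite -size_filter -card_edges ?filter_uniq //; last first.
  by move=> p; rewrite mem_filter => /andP[_ /sD].
apply: eq_card => e; rewrite !inE; apply/andP/mapP => [[/mapP[p ps ->] vp]|[p]].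
- by exists p; rewrite // mem_filter ps andbT -mem_edge.
- by rewrite mem_filter => /andP[vp ps] ->; rewrite map_f ?mem_edge.
Qed.

Definition degree_criterionb (s : seq (V3 * V3)) : bool :=
  all (fun v => count (incident v) s == count (incident v) (map partner s)) grid.

Lemma degree_criterionP (s : seq (V3 * V3)) :
  uniq s -> {subset s <= diag_reps} ->
  reflect (degree_criterion (edges s)) (degree_criterionb s).
Proof.
move=> us sD; have ups : uniq (map partner s) by rewrite (map_inj_uniq (inv_inj partnerK)).
have psD : {subset map partner s <= diag_reps}.
  by move=> _ /mapP[p /sD pD ->]; apply: partner_diag.
rewrite /degree_criterion ptrans_edges; apply: (iffP allP) => dc v.
- by rewrite !degree_edges //; apply/eqP/dc/mem_grid.
- by rewrite -!degree_edges // dc.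
Qed.

Definition grid_vertex (i j : nat) : V3 := (nth ord0 ord3 i.-1, nth ord0 ord3 j.-1).

Lemma gvE (i j : nat) : i.-1 < 3 -> j.-1 < 3 -> gv i j = grid_vertex i j.
Proof.
have inordE k : k < 3 -> inord k = nth ord0 ord3 k.
  by move=> k3; apply: val_inj; rewrite /= inordK //; case: k k3 => [|[|[|]]].
by move=> i3 j3; rewrite /gv !inordE.
Qed.

Definition b4_reps : seq (V3 * V3) :=
  [:: (grid_vertex 1 1, grid_vertex 2 3); (grid_vertex 2 1, grid_vertex 3 3);
      (grid_vertex 1 2, grid_vertex 3 1); (grid_vertex 1 3, grid_vertex 3 2)].

Lemma B4_edges : B4 = edges b4_reps.
Proof. by rewrite /B4 !gvE //; apply/setP => e; rewrite !inE !orbA. Qed.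

Lemma b4_reps_diag : uniq b4_reps && all (mem diag_reps) b4_reps.
Proof. by vm_compute. Qed.

Lemma card_B4 : #|B4| = 4.
Proof.
by have /andP[u /allP sD] := b4_reps_diag; rewrite B4_edges card_edges.
Qed.

Lemma grid_graph_B4 : grid_graph B4.
Proof.
by have /andP[_ /allP sD] := b4_reps_diag; rewrite B4_edges; apply: grid_graph_edges.
Qed.

Lemma degree_criterion_B4 : degree_criterion B4.
Proof.
have /andP[u /allP sD] := b4_reps_diag.
by rewrite B4_edges; apply/degree_criterionP => //; vm_compute.
Qed.

Definition seq_fun (t : seq 'I_3) (i : 'I_3) : 'I_3 := nth i t i.

Lemma seq_fun_inj (t : seq 'I_3) : t \in permutations ord3 -> injective (seq_fun t).
Proof.
rewrite mem_permutations => tP i j; have t3 : size t = 3 by rewrite (perm_size tP).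
rewrite /seq_fun !(set_nth_default ord0) ?t3 // => /eqP.
by rewrite nth_uniq ?t3 ?(perm_uniq tP) // => /eqP/val_inj.
Qed.

Definition same_edge (p q : V3 * V3) : bool := (p == q) || (p == (q.2, q.1)).

Lemma eq_edge (p q : V3 * V3) : (edge p == edge q) = same_edge p q.
Proof. by case: p q => [a b] [c d]; rewrite /edge eq_set2 /same_edge !xpair_eqE. Qed.

Definition locally_B4b (s : seq (V3 * V3)) : bool :=
  has (fun t => has (fun u =>
    let phi := grid_map (seq_fun t) (seq_fun u) in
    all (fun p => has (same_edge (phi p.1, phi p.2)) b4_reps) s)
  (permutations ord3)) (permutations ord3).

Lemma locally_B4b_sound (s : seq (V3 * V3)) :
  uniq s -> {subset s <= diag_reps} -> size s = 4 ->
  locally_B4b s -> locally_isomorphic (edges s) B4.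
Proof.
move=> us sD s4 /hasP[t tP /hasP[u uP /allP phiB4]].
set phi := grid_map (seq_fun t) (seq_fun u).
have phi_inj : injective phi by apply: grid_map_inj; apply: seq_fun_inj.
have B4E : B4 = [set phi @: e | e : {set V3} in edges s].
  apply/esym/eqP; rewrite eqEcard card_imset; last exact: imset_inj.
  rewrite card_edges // card_B4 s4 leqnn andbT.
  apply/subsetP => _ /imsetP[e + ->]; rewrite inE => /mapP[p ps ->].
  have /hasP[q qB4] := phiB4 p ps; rewrite -eq_edge => /eqP phi_pq.
  rewrite B4_edges inE imset_set2; change (edge (phi p.1, phi p.2) \in map edge b4_reps).
  by rewrite phi_pq map_f.
exists (perm (seq_fun_inj tP)), (perm (seq_fun_inj uP)) => i j k l.
by rewrite !permE; apply: (imset_two_sets phi_inj B4E (i, j) (k, l)).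
Qed.

Definition cross_pairb (s : seq (V3 * V3)) : bool :=
  has (fun p => has (fun q => perm_eq s [:: p; partner p; q; partner q]) s) s.

Lemma criss_cross_partner (p : V3 * V3) :
  p \in diag_reps -> criss_cross [set edge p; edge (partner p)].
Proof.
case: p => [[i j] [k l]]; rewrite mem_diag_reps => /andP[ik jl].
by exists i, j, k, l; split; rewrite // -val_eqE neq_ltn ik.
Qed.

Lemma cross_pairb_sound (s : seq (V3 * V3)) :
  uniq s -> {subset s <= diag_reps} -> cross_pairb s ->
  exists C1 C2 : {set {set V3}},
    [/\ criss_cross C1, criss_cross C2, [disjoint C1 & C2] & edges s = C1 :|: C2].
Proof.
move=> us sD /hasP[p ps /hasP[q qs sP]].
have uE : uniq [:: edge p; edge (partner p); edge q; edge (partner q)].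
  rewrite -[X in uniq X]/(map edge [:: p; partner p; q; partner q]).
  rewrite map_inj_in_uniq -?(perm_uniq sP) //.
  by apply: sub_in2 edge_inj => r; rewrite -(perm_mem sP) => /sD.
exists [set edge p; edge (partner p)], [set edge q; edge (partner q)].
split; [exact/criss_cross_partner/sD | exact/criss_cross_partner/sD | |].
- move: uE; rewrite /= !inE !negb_or => /and4P[/and3P[_ ac ad] /andP[bc bd] _ _].
  rewrite -setI_eq0; apply/eqP/setP => e; rewrite !inE.
  apply/negbTE/negP => /andP[/orP[]/eqP-> /orP[]/eqP pq].
  + by move: ac; rewrite pq eqxx.
  + by move: ad; rewrite pq eqxx.
  + by move: bc; rewrite pq eqxx.
  + by move: bd; rewrite pq eqxx.
- apply/setP => e; rewrite inE (perm_mem (perm_map edge sP)).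
  by rewrite !inE orbA.
Qed.

Lemma ptrans_edges_closed (s : seq (V3 * V3)) :
  {in s, forall p, partner p \in s} -> ptrans (edges s) = edges s.
Proof.
move=> closed; have partner_s : map partner s =i s.
  move=> r; apply/mapP/idP => [[p /closed pr ->] // | rs].
  by exists (partner r); rewrite ?partnerK ?closed.
by rewrite ptrans_edges; apply/setP => e; rewrite !inE (eq_mem_map edge partner_s).
Qed.

Lemma criss_cross_edges (C : {set {set V3}}) :
  criss_cross C -> exists p, C = [set edge p; edge (partner p)].
Proof. by case=> i [j [k [l [_ _ ->]]]]; exists ((i, j), (k, l)). Qed.

Lemma ptrans_cross_union (C1 C2 : {set {set V3}}) :
  criss_cross C1 -> criss_cross C2 -> ptrans (C1 :|: C2) = C1 :|: C2.
Proof.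
move=> /criss_cross_edges[p ->] /criss_cross_edges[q ->].
have -> : [set edge p; edge (partner p)] :|: [set edge q; edge (partner q)] =
          edges [:: p; partner p; q; partner q].
  by apply/setP => e; rewrite !inE /= -!orbA.
apply: (@ptrans_edges_closed [:: p; partner p; q; partner q]) => r.
by rewrite !inE => /or4P[] /eqP->; rewrite ?partnerK eqxx ?orbT.
Qed.

Lemma diagonal_4_classification :
  all (fun s => locally_B4b s || cross_pairb s)
      [seq s <- subseqs_of_size 4 diag_reps | degree_criterionb s].
Proof. by vm_compute. Qed.

Theorem mainTheorem13 (E : {set {set V3}}) :
  grid_graph E -> #|E| = 4 -> (forall e, e \in E -> diagonal e) ->
  (degree_criterion E <->
     (locally_isomorphic E B4 \/
      exists C1 C2 : {set {set V3}},
        [/\ criss_cross C1, criss_cross C2, [disjoint C1 & C2] & E = C1 :|: C2])).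
Proof.
move=> gE E4 diagE; set s := [seq p <- diag_reps | edge p \in E].
have sD : {subset s <= diag_reps} by move=> p; rewrite mem_filter => /andP[].
have us : uniq s by rewrite filter_uniq ?uniq_diag_reps.
have Es : E = edges s := edges_diagonal diagE.
have s4 : size s = 4 by rewrite -card_edges // -Es.
split=> [dcE | [liE | [C1 [C2 [c1 c2 _ ->]]]]].
- have : s \in [seq t <- subseqs_of_size 4 diag_reps | degree_criterionb t].
    rewrite mem_filter -s4 mem_subseqs_of_size ?filter_subseq // andbT.
    by apply/degree_criterionP; rewrite // -Es.
  case/(allP diagonal_4_classification)/orP.
  + by move/(locally_B4b_sound us sD s4); rewrite -Es; left.
  + by move/(cross_pairb_sound us sD); rewrite -Es; right.
- exact: locally_isomorphic_degree_criterion gE grid_graph_B4 liE degree_criterion_B4.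
- by move=> v; rewrite ptrans_cross_union.
Qed.
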